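(* For every cake instance (i.e., $m=0$), the allocation returned by Generalized MES satisfies cake EJR.
   Context: Model: There is a set of agents $N=\{1,\dots,n\}$. The resource $R$ consists of a cake $C=[0,c]$ for a real $c\ge 0$ and a set of indivisible goods $G=\{g_1,\dots,g_m\}$ for an integer $m\ge 0$, with $\max(c,m)>0$. A piece of cake is a union of finitely many disjoint closed subintervals of $C$; its length $\ell(\cdot)$ is the sum of the lengths of its intervals. A bundle $R'=(C',G')$ consists of a piece of cake $C'\subseteq C$ and a set $G'\subseteq G$; its size is $s(R')=\ell(C')+|G'|$. Each agent $i$ approves a bundle $R_i=(C_i,G_i)$, and her utility for a bundle $R'$ is $u_i(R')=\ell(C_i\cap C')+|G_i\cap G'|$. A parameter $\alpha\in(0,c+m]$ is given; an allocation is a bundle $A$ with $s(A)\le\alpha$. A cake instance is one with $m=0$. For a real $t>0$, $N^*\subseteq N$ is $t$-cohesive if $|N^*|\ge t n/\alpha$ and $s(\bigcap_{i\in N^*}R_i)\ge t$. Cake EJR: an allocation $A$ satisfies cake EJR if for every real $t>0$ and every $t$-cohesive group $N^*$, some $j\in N^*$ has $u_j(A)\ge t$. Generalized MES (Method of Equal Shares): Step 1: set $R'=(C',G')=(\emptyset,\emptyset)$ and budgets $b_i=\alpha/n$ for all $i$; agents still present are ''remaining''. Step 2: divide the remaining cake into intervals $I_1,\dots,I_k$ such that each agent approves each interval entirely or not at all. For an interval $I_j=[x_0,x_1]$, $x\in(x_0,x_1]$ and $\rho\ge 0$, $I_j$ is $(x,\rho)$-affordable if $\sum_{i\in N_{I_j}}\min(b_i,(x-x_0)\rho)=x-x_0$,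 where $N_{I_j}$ is the set of remaining agents approving $I_j$. A remaining good $g$ is $\rho$-affordable if $\sum_{i\in N_g}\min(b_i,\rho)=1$, where $N_g$ is the set of remaining agents approving $g$. Step 3: if no $\rho$-affordable good and no $(x,\rho)$-affordable piece of cake exists for any $\rho$, return $R'$. Otherwise take either an interval $I_j$ with the smallest $\rho$ together with the largest $x$ such that $I_j$ is $(x,\rho)$-affordable, or a good $g$ with the smallest $\rho$ such that $g$ is $\rho$-affordable, whichever has smaller $\rho$. In the first case deduct $\min(b_i,(x-x_0)\rho)$ from $b_i$ for each $i\in N_{I_j}$, remove $[x_0,x]$ from the remaining cake and add it to $C'$; in the second case deduct $\min(b_i,\rho)$ from $b_i$ for each $i\in N_g$, remove $g$ from the remaining goods and add it to $G'$. Remove all agents with zero budget and go to Step 2. *)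

From HB Require Import structures.
From mathcomp Require Import all_boot all_order all_algebra.
From mathcomp Require Import all_classical all_reals all_analysis.
Set Implicit Arguments. Unset Strict Implicit. Unset Printing Implicit Defensive.
Import Order.TTheory GRing.Theory Num.Theory.
Local Open Scope classical_set_scope.
Local Open Scope ring_scope.

Definition len {R : realType} (S : set R) : R := fine (lebesgue_measure S).

Definition cint {R : realType} (a b : R) : set R := [set x | a <= x <= b].

Definition is_piece {R : realType} (c : R) (P : set R) : Prop :=
  exists s : seq (R * R),
    (forall p, p \in s -> [&& 0 <= p.1, p.1 <= p.2 & p.2 <= c]) /\
    (forall i j : nat, (i < j < size s)%N ->
        cint (nth (0,0) s i).1 (nth (0,0) s i).2
        `&` cint (nth (0,0) s j).1 (nth (0,0) s j).2 = set0) /\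
    P = [set x | exists2 p, p \in s & cint p.1 p.2 x].

Definition in_NI {R : realType} {n : nat} (C : 'I_n -> set R) (b : 'I_n -> R)
  (a0 a1 : R) (i : 'I_n) : bool :=
  `[< 0 < b i /\ cint a0 a1 `<=` C i >].

Definition affordable {R : realType} {n : nat} (C : 'I_n -> set R)
  (b : 'I_n -> R) (a0 a1 x rho : R) : Prop :=
  a0 < x <= a1 /\ 0 <= rho /\
  \sum_(i | in_NI C b a0 a1 i) Num.min (b i) ((x - a0) * rho) = x - a0.

Definition valid_division {R : realType} {n : nat} (c : R) (C : 'I_n -> set R)
  (Cp : set R) (D : seq (R * R)) : Prop :=
  (forall p, p \in D ->
     [/\ 0 <= p.1, p.1 < p.2, p.2 <= c,
         len (cint p.1 p.2 `&` Cp) = 0 &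
         forall i : 'I_n, cint p.1 p.2 `<=` C i \/ len (cint p.1 p.2 `&` C i) = 0]) /\
  (forall i j : nat, (i < j < size D)%N ->
     len (cint (nth (0,0) D i).1 (nth (0,0) D i).2
          `&` cint (nth (0,0) D j).1 (nth (0,0) D j).2) = 0) /\
  len ((cint 0 c `\` Cp) `\` [set x | exists2 p, p \in D & cint p.1 p.2 x]) = 0.

(* State of Generalized MES on a cake instance: selected cake and budgets. *)
Definition mes_state (R : realType) (n : nat) : Type := (set R * ('I_n -> R))%type.

(* One iteration of Steps 2-3 (cake case, no goods). *)
Definition mes_step {R : realType} {n : nat} (c : R) (C : 'I_n -> set R)
  (s s' : mes_state R n) : Prop :=
  let: (Cp, b) := s in
  exists D : seq (R * R), valid_division c C Cp D /\
  exists p, p \in D /\ exists x rho : R,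
    [/\ affordable C b p.1 p.2 x rho,
        (forall q x' rho', q \in D -> affordable C b q.1 q.2 x' rho' -> rho <= rho'),
        (forall x', affordable C b p.1 p.2 x' rho -> x' <= x) &
        s' = (Cp `|` cint p.1 x,
              fun i => if in_NI C b p.1 p.2 i
                       then b i - Num.min (b i) ((x - p.1) * rho) else b i)].

Definition mes_final {R : realType} {n : nat} (c : R) (C : 'I_n -> set R)
  (s : mes_state R n) : Prop :=
  exists D : seq (R * R), valid_division c C s.1 D /\
    forall q x rho, q \in D -> ~ affordable C s.2 q.1 q.2 x rho.

Inductive mes_reach {R : realType} {n : nat} (c : R) (C : 'I_n -> set R) :
  mes_state R n -> mes_state R n -> Prop :=
| mes_refl s : mes_reach c C s s
| mes_next s s' s'' : mes_step c C s s' -> mes_reach c C s' s'' -> mes_reach c C s s''.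

Definition mes_outcome {R : realType} {n : nat} (c alpha : R) (C : 'I_n -> set R)
  (A : set R) : Prop :=
  exists b, mes_reach c C (set0, fun _ => alpha / n%:R) (A, b)
            /\ mes_final c C (A, b).

(* t-cohesive group (cake instance: size of a bundle is its length). *)
Definition t_cohesive {R : realType} {n : nat} (alpha : R) (C : 'I_n -> set R)
  (t : R) (Ns : {set 'I_n}) : Prop :=
  t * n%:R / alpha <= #|Ns|%:R /\
  t <= len [set x | forall i, i \in Ns -> C i x].

Definition cake_EJR {R : realType} {n : nat} (alpha : R) (C : 'I_n -> set R)
  (A : set R) : Prop :=
  forall (t : R), 0 < t -> forall Ns : {set 'I_n}, t_cohesive alpha C t Ns ->
    exists2 j, j \in Ns & t <= len (C j `&` A).

From HB Require Import structures.
From mathcomp Require Import all_boot all_order all_algebra.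
From mathcomp Require Import all_classical all_reals all_analysis.
From mathcomp Require Import ring lra.
Import Order.TTheory GRing.Theory Num.Theory.
Local Open Scope classical_set_scope.
Local Open Scope ring_scope.

(* Suppose every member of a t-cohesive group Ns had utility below t for the
   outcome. Then along the run each member's budget keeps covering a 1/|Ns| share
   of her remaining deficit t - u_i: initially alpha/n >= t/|Ns| by cohesiveness,
   and at every state some positive-length part of the common cake of Ns is still
   unselected, so an interval approved by all of Ns is affordable at a price
   rho <= 1/|Ns|.  Hence MES only selects pieces at price rho <= 1/|Ns|, each member
   pays at most 1/|Ns| per unit of length she gains, and the invariant survives.
   At the final state that interval is still affordable, contradicting
   termination. *)

Definition union_cint {R : realType} (s : seq (R * R)) : set R :=
  [set x | exists2 p, p \in s & cint p.1 p.2 x].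

Section Length.
Context {R : realType}.
Implicit Types (a b : R) (S T : set R) (s : seq (R * R)).

Lemma cint_itv a b : cint a b = [set` `[a, b]].
Proof. by apply/seteqP; split => x /=; rewrite in_itv. Qed.

Lemma measurable_cint a b : measurable (cint a b).
Proof. by rewrite cint_itv; exact: measurable_itv. Qed.

Lemma lebesgue_measure_cint a b : a <= b ->
  lebesgue_measure (cint a b) = (b - a)%:E.
Proof.
move=> ab; rewrite cint_itv lebesgue_measure_itv /= lte_fin.
have [ab'|ba] := ltP a b; first by rewrite EFinB.
have -> : a = b by apply/eqP; rewrite eq_le ab ba.
by rewrite subrr.
Qed.

Lemma len_cint a b : a <= b -> len (cint a b) = b - a.
Proof. by move=> ab; rewrite /len lebesgue_measure_cint. Qed.

Lemma len_ge0 S : 0 <= len S.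
Proof. by rewrite /len fine_ge0 // measure_ge0. Qed.

Lemma len_set0 : len (@set0 R) = 0.
Proof. by rewrite /len measure0. Qed.

Lemma union_cint_nil : union_cint [::] = @set0 R.
Proof. by apply/seteqP; split => x // [p]. Qed.

Lemma union_cint_cons p s :
  union_cint (p :: s) = cint p.1 p.2 `|` union_cint s.
Proof.
apply/seteqP; split => x /=.
  by move=> [q]; rewrite inE => /orP [/eqP -> | qs] xq; [left | right; exists q].
move=> [xp | [q qs xq]]; first by exists p; rewrite ?inE ?eqxx.
by exists q; rewrite ?inE ?qs ?orbT.
Qed.

Lemma measurable_union_cint s : measurable (union_cint s).
Proof.
elim: s => [|p s IH]; first by rewrite union_cint_nil.
by rewrite union_cint_cons; exact: measurableU (measurable_cint _ _) IH.
Qed.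

Context {c : R} (c_ge0 : 0 <= c).

Lemma lebesgue_measure_len {S} : measurable S -> S `<=` cint 0 c ->
  lebesgue_measure S = (len S)%:E.
Proof.
move=> mS Sc; rewrite /len fineK // ge0_fin_numE ?measure_ge0 //.
apply: (@le_lt_trans _ _ (lebesgue_measure (cint 0 c))).
  by apply: le_measure => //; rewrite inE //; exact: measurable_cint.
by rewrite lebesgue_measure_cint // ltry.
Qed.

Lemma le_len {S T} : measurable S -> measurable T -> T `<=` cint 0 c ->
  S `<=` T -> len S <= len T.
Proof.
move=> mS mT Tc ST; have Sc : S `<=` cint 0 c by move=> x /ST /Tc.
rewrite -lee_fin -(lebesgue_measure_len mS Sc) -(lebesgue_measure_len mT Tc).
by apply: le_measure => //; rewrite inE.
Qed.

Lemma len_setDI {S T} : measurable S -> measurable T -> S `<=` cint 0 c ->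
  len S = len (S `\` T) + len (S `&` T).
Proof.
move=> mS mT Sc; apply/eqP; rewrite -eqe EFinD -(lebesgue_measure_len mS Sc).
rewrite -(lebesgue_measure_len (measurableD mS mT)); last by move=> x [/Sc].
rewrite -(lebesgue_measure_len (measurableI _ _ mS mT)); last by move=> x [/Sc].
by rewrite -measureDI.
Qed.

Lemma len_setU_le {S T} : measurable S -> measurable T -> S `<=` cint 0 c ->
  T `<=` cint 0 c -> len (S `|` T) <= len S + len T.
Proof.
move=> mS mT Sc Tc; rewrite -lee_fin EFinD.
rewrite -(lebesgue_measure_len mS Sc) -(lebesgue_measure_len mT Tc).
rewrite -(lebesgue_measure_len (measurableU _ _ mS mT)); first exact: measureU2.
by move=> x [/Sc | /Tc].
Qed.

Lemma piece_bounded {P} : is_piece c P -> measurable P /\ P `<=` cint 0 c.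
Proof.
move=> [s [hs [_ ->]]]; split; first exact: measurable_union_cint.
move=> x [p /hs /and3P [p1_ge0 p12 p2_le] /= /andP [px xp]].
by rewrite /cint /= (le_trans p1_ge0 px) (le_trans xp p2_le).
Qed.

Lemma len_union_cintI_eq0 s K : measurable K -> K `<=` cint 0 c ->
  (forall p, p \in s -> len (cint p.1 p.2 `&` K) = 0) ->
  len (union_cint s `&` K) = 0.
Proof.
move=> mK Kc; elim: s => [|p s IH] hs; first by rewrite union_cint_nil set0I len_set0.
rewrite union_cint_cons setIUl; apply/eqP; rewrite eq_le len_ge0 andbT.
apply: le_trans (len_setU_le _ _ _ _) _.
- exact: measurableI (measurable_cint _ _) mK.
- exact: measurableI (measurable_union_cint _) mK.
- by move=> x [_ /Kc].
- by move=> x [_ /Kc].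
rewrite hs ?mem_head // IH ?addr0 // => q qs.
by apply: hs; rewrite in_cons qs orbT.
Qed.

Lemma len_setI_addl {S T I} : measurable S -> measurable T -> measurable I ->
  S `<=` cint 0 c -> I `<=` S -> len (I `&` T) = 0 ->
  len (S `&` T) + len I <= len (S `&` (T `|` I)).
Proof.
move=> mS mT mI Sc IS IT0.
have mSTI : measurable (S `&` (T `|` I)) by exact: measurableI (measurableU _ _ mT mI).
have STIc : S `&` (T `|` I) `<=` cint 0 c by move=> x [/Sc].
have Ic : I `<=` cint 0 c by move=> x /IS /Sc.
rewrite (len_setDI mSTI mT STIc) (len_setDI mI mT Ic) IT0 addr0 addrC.
apply: lerD; apply: le_len => //.
- exact: measurableD.
- exact: measurableD.
- by move=> x [/STIc].
- by move=> x [Ix nTx]; split => //; split; [exact: IS | right].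
- exact: measurableI.
- exact: measurableI.
- by move=> x [/STIc].
- by move=> x [Sx Tx]; split => //; split => //; left.
Qed.

End Length.

Section Affordability.
Context {R : realType} {n : nat} (C : 'I_n -> set R) (b : 'I_n -> R).

Lemma affordable_le_inv_card (a0 a1 : R) (Ns : {set 'I_n}) :
  a0 < a1 -> (0 < #|Ns|)%N ->
  (forall i, i \in Ns -> cint a0 a1 `<=` C i /\ 0 < b i) ->
  exists x rho, affordable C b a0 a1 x rho /\ rho <= #|Ns|%:R^-1.
Proof.
move=> a01 Ns_gt0 hN; have [j jN] := card_gt0P Ns_gt0.
pose P := in_NI C b a0 a1.
have PN i : i \in Ns -> P i by move=> /hN [? ?]; apply/asboolP.
pose m := #|[pred i | P i]|.
have Nm : (#|Ns| <= m)%N by apply/subset_leq_card/fintype.subsetP => i /PN.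
have m_gt0 : (0 < m)%N by apply: leq_trans Nm; apply/card_gt0P; exists j.
have m_gt0R : 0 < m%:R :> R by rewrite ltr0n.
(* Each of the m approvers pays y/m, where y is below every budget. *)
pose y := \big[Num.min/(a1 - a0)]_(i | P i) b i.
have y_gt0 : 0 < y.
  apply: (big_ind (fun v => 0 < v)); first by rewrite subr_gt0.
    by move=> u v u0 v0; rewrite lt_min u0 v0.
  by move=> i /asboolP [].
have y_le_a : y <= a1 - a0.
  by apply: (big_rec (fun v => v <= a1 - a0)) => // i v _ v_le; rewrite ge_min v_le orbT.
have y_le_b i : P i -> y <= b i by move=> Pi; rewrite /y (bigD1 i) //= ge_min lexx.
exists (a0 + y), m%:R^-1; split; last first.
  by rewrite lef_pV2 ?posrE ?ltr0n ?ler_nat.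
split; first by rewrite ltrDl y_gt0 -lerBrDl.
split; first by rewrite invr_ge0.
rewrite addrAC subrr add0r (eq_bigr (fun _ => y / m%:R)); last first.
  move=> i Pi; apply/min_idPr; apply: le_trans (y_le_b i Pi).
  by rewrite ler_pdivrMr // ler_peMr ?ler1n // ltW.
by rewrite sumr_const -/m -[_ *+ m]mulr_natr divfK // gt_eqF.
Qed.

End Affordability.

Section Division.
Context {R : realType} {n : nat} {c : R} {C : 'I_n -> set R} (c_ge0 : 0 <= c).

Lemma valid_division_meets {Cp K : set R} {D : seq (R * R)} :
  measurable Cp -> measurable K -> K `<=` cint 0 c ->
  0 < len (K `\` Cp) -> valid_division c C Cp D ->
  exists2 q, q \in D & 0 < len (cint q.1 q.2 `&` K).
Proof.
move=> mCp mK Kc KCp_gt0 [_ [_ uncovered0]].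
have [//|hD] := pselect (exists2 q, q \in D & 0 < len (cint q.1 q.2 `&` K)).
suff : len (K `\` Cp) <= 0 by rewrite leNgt KCp_gt0.
have D0 p : p \in D -> len (cint p.1 p.2 `&` K) = 0.
  move=> pD; apply/eqP; rewrite eq_le len_ge0 andbT leNgt.
  by apply/negP => ?; apply: hD; exists p.
pose U := union_cint D; pose E := (cint 0 c `\` Cp) `\` U.
have mU : measurable U := measurable_union_cint D.
have mE : measurable E.
  by apply: measurableD => //; apply: measurableD => //; exact: measurable_cint.
have Ec : E `<=` cint 0 c by move=> x [[]].
have UKc : U `&` K `<=` cint 0 c by move=> x [_ /Kc].
have KCp_sub : K `\` Cp `<=` E `|` (U `&` K).
  move=> x [Kx nCpx]; have [Ux|nUx] := pselect (U x); first by right.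
  by left; split => //; split => //; exact: Kc.
apply: le_trans (le_len c_ge0 _ _ _ KCp_sub) _.
- exact: measurableD.
- exact: measurableU _ _ mE (measurableI _ _ mU mK).
- by move=> x [/Ec | /UKc].
apply: le_trans (len_setU_le c_ge0 mE (measurableI _ _ mU mK) Ec UKc) _.
by rewrite uncovered0 (len_union_cintI_eq0 c_ge0 D K mK Kc D0) addr0.
Qed.

End Division.

Section Run.
Context {R : realType} {n : nat} {c : R} {C : 'I_n -> set R}.

Lemma mes_step_grow {s s'} : mes_step c C s s' -> s.1 `<=` s'.1.
Proof.
by case: s => Cp b [D [_ [p [_ [x [rho [_ _ _ ->]]]]]]] y Cpy; left.
Qed.

Lemma mes_reach_grow {s s'} : mes_reach c C s s' -> s.1 `<=` s'.1.
Proof.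
by elim => [s0 x // | s0 s1 s2 /mes_step_grow s01 _ s12 x /s01 /s12].
Qed.

Lemma mes_step_bounded {s s'} : mes_step c C s s' ->
  measurable s.1 -> s.1 `<=` cint 0 c -> measurable s'.1 /\ s'.1 `<=` cint 0 c.
Proof.
case: s => Cp b [D [[hD _] [p [pD [x [rho [[/andP [_ xp] _] _ _ ->]]]]]]] /= mCp Cpc.
have [p0 _ p2 _ _] := hD p pD.
split; first exact: measurableU mCp (measurable_cint _ _).
move=> y [/Cpc // | /andP [py yx]].
by rewrite /cint /= (le_trans p0 py) (le_trans yx (le_trans xp p2)).
Qed.

Lemma mes_reach_bounded {s s'} : mes_reach c C s s' ->
  measurable s.1 -> s.1 `<=` cint 0 c -> measurable s'.1 /\ s'.1 `<=` cint 0 c.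
Proof.
elim => // s0 s1 s2 st _ IH m0 s0c.
by have [m1 s1c] := mes_step_bounded st m0 s0c; exact: IH.
Qed.

End Run.

Section BudgetInvariant.
Context {R : realType} {n : nat} {c : R} {C : 'I_n -> set R} {A : set R}.
Context {Ns : {set 'I_n}} {t : R}.
Hypotheses (c_ge0 : 0 <= c) (C_bounded : forall i, measurable (C i) /\ C i `<=` cint 0 c).
Hypotheses (mA : measurable A) (A_bounded : A `<=` cint 0 c).
Hypothesis Ns_gt0 : (0 < #|Ns|)%N.
Hypothesis Ns_common : t <= len [set x | forall i, i \in Ns -> C i x].
Hypothesis Ns_unsatisfied : forall i, i \in Ns -> len (C i `&` A) < t.

Definition budget_inv (Cp : set R) (b : 'I_n -> R) : Prop :=
  forall i, i \in Ns -> #|Ns|%:R^-1 * (t - len (C i `&` Cp)) <= b i.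

Let K := [set x | forall i, i \in Ns -> C i x].
Let k : R := #|Ns|%:R^-1.

Let k_gt0 : 0 < k.
Proof. by rewrite invr_gt0 ltr0n. Qed.

Let mK : measurable K.
Proof.
have -> : K = \bigcap_(i in [set i | i \in Ns]) C i by [].
by apply: fin_bigcap_measurable => [|i _]; [exact: finite_finset | case: (C_bounded i)].
Qed.

Let K_bounded : K `<=` cint 0 c.
Proof.
have [j jN] := card_gt0P Ns_gt0.
by move=> x /(_ j jN); case: (C_bounded j) => _; apply.
Qed.

Let mCI i {Cp : set R} : measurable Cp -> measurable (C i `&` Cp).
Proof. by move=> mCp; apply: measurableI => //; case: (C_bounded i). Qed.

Let CI_bounded i Cp : C i `&` Cp `<=` cint 0 c.
Proof. by move=> x [Cix _]; case: (C_bounded i) => _; apply. Qed.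

Lemma len_setI_lt {Cp i} : measurable Cp -> Cp `<=` A -> i \in Ns ->
  len (C i `&` Cp) < t.
Proof.
move=> mCp CpA iN; apply: le_lt_trans (Ns_unsatisfied i iN).
apply: (le_len c_ge0 (mCI i mCp) (mCI i mA) (CI_bounded i A)).
by move=> x [Cix /CpA].
Qed.

Lemma len_common_setD_gt0 {Cp} : measurable Cp -> Cp `<=` A -> 0 < len (K `\` Cp).
Proof.
move=> mCp CpA; have [j jN] := card_gt0P Ns_gt0.
have KCp_le : len (K `&` Cp) <= len (C j `&` Cp).
  apply: (le_len c_ge0 (measurableI _ _ mK mCp) (mCI j mCp) (CI_bounded j Cp)).
  by move=> x [Kx Cpx]; split => //; exact: Kx.
have t_le_K : t <= len K := Ns_common.
have := len_setDI c_ge0 mK mCp K_bounded; have := len_setI_lt mCp CpA jN.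
lra.
Qed.

Lemma budget_inv_gt0 {Cp b i} : measurable Cp -> Cp `<=` A -> budget_inv Cp b ->
  i \in Ns -> 0 < b i.
Proof.
move=> mCp CpA inv iN; apply: lt_le_trans (inv i iN).
by rewrite mulr_gt0 // subr_gt0 len_setI_lt.
Qed.

Lemma cheap_affordable {Cp b D} : measurable Cp -> Cp `<=` A -> budget_inv Cp b ->
  valid_division c C Cp D ->
  exists2 q, q \in D &
    exists x rho, affordable C b q.1 q.2 x rho /\ rho <= #|Ns|%:R^-1.
Proof.
move=> mCp CpA inv vD.
have [q qD qK_gt0] :=
  valid_division_meets c_ge0 mCp mK K_bounded (len_common_setD_gt0 mCp CpA) vD.
exists q => //; have [_ q12 _ _ all_or_nothing] := vD.1 q qD.
apply: affordable_le_inv_card => // i iN; split; last exact: budget_inv_gt0 mCp CpA inv iN.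
(* All-or-nothing approval: meeting [K] in positive length forces approval by all. *)
case: (all_or_nothing i) => // qCi0; move: qK_gt0; rewrite -qCi0 ltNge.
have mq := measurable_cint q.1 q.2.
have [mCi Cic] := C_bounded i.
case/negP; apply: (le_len c_ge0 (measurableI _ _ mq mK) (measurableI _ _ mq mCi) _).
- by move=> x [_ /Cic].
- by move=> x [qx Kx]; split => //; exact: Kx.
Qed.

Lemma budget_inv_init (alpha : R) : 0 < alpha -> (0 < n)%N ->
  t * n%:R / alpha <= #|Ns|%:R -> budget_inv set0 (fun _ => alpha / n%:R).
Proof.
move=> alpha_gt0 n_gt0 cohesive i _; rewrite setI0 len_set0 subr0.
have n_gt0R : 0 < n%:R :> R by rewrite ltr0n.
rewrite mulrC ler_pdivrMr ?ltr0n // mulrAC ler_pdivlMr // [alpha * _]mulrC.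
by rewrite -ler_pdivrMr.
Qed.

Lemma budget_inv_step {Cp b s'} : measurable Cp -> Cp `<=` A -> budget_inv Cp b ->
  mes_step c C (Cp, b) s' -> budget_inv s'.1 s'.2.
Proof.
move=> mCp CpA inv [D [vD [p [pD [x [rho [afp rho_min _ ->]]]]]]] i iN /=.
have [q qD [x' [rho' [afq rho'_le]]]] := cheap_affordable mCp CpA inv vD.
have rho_le : rho <= k := le_trans (rho_min q x' rho' qD afq) rho'_le.
have [_ _ _ pCp0 _] := vD.1 p pD.
case: afp => /andP [px xp] _.
pose I := cint p.1 x; have mI : measurable I := measurable_cint p.1 x.
have [mCi Cic] := C_bounded i.
have inv_i := inv i iN; rewrite -/k in inv_i.
have u_le : len (C i `&` Cp) <= len (C i `&` (Cp `|` I)).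
  apply: (le_len c_ge0 (mCI i mCp) (mCI i (measurableU _ _ mCp mI)) (CI_bounded i _)).
  by move=> y [Ciy Cpy]; split => //; left.
case: ifP => [/asboolP [_ pCi] | _]; last first.
  by apply: le_trans inv_i; apply: (ler_wpM2l (ltW k_gt0)); lra.
have ICi : I `<=` C i.
  by move=> y /andP [py yx]; apply: pCi; rewrite /cint /= py (le_trans yx xp).
have ICp0 : len (I `&` Cp) = 0.
  apply/eqP; rewrite eq_le len_ge0 andbT -pCp0.
  apply: (le_len c_ge0 (measurableI _ _ mI mCp)
                    (measurableI _ _ (measurable_cint _ _) mCp)).
  - by move=> y [_ /CpA /A_bounded].
  - by move=> y [/andP [py yx] Cpy]; split => //; rewrite /cint /= py (le_trans yx xp).
have gain := len_setI_addl c_ge0 mCi mCp mI Cic ICi ICp0.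
rewrite len_cint in gain; last exact: ltW.
have pay : Num.min (b i) ((x - p.1) * rho) <= (x - p.1) * k.
  by rewrite ge_min ler_wpM2l ?orbT // subr_ge0 ltW.
have : k * (t - len (C i `&` (Cp `|` I))) <= k * (t - len (C i `&` Cp)) - (x - p.1) * k.
  rewrite (_ : _ - _ * k = k * (t - len (C i `&` Cp) - (x - p.1))); last by ring.
  by apply: (ler_wpM2l (ltW k_gt0)); lra.
rewrite -/k -/I; lra.
Qed.

Lemma budget_inv_reach_false {s s'} : mes_reach c C s s' -> mes_final c C s' ->
  s'.1 `<=` A -> measurable s.1 -> s.1 `<=` A -> budget_inv s.1 s.2 -> False.
Proof.
move=> run fin s'A; elim: run fin s'A => [{}s | s0 s1 s2 st run IH] fin s'A m0 s0A inv.
  have [D [vD no_aff]] := fin.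
  have [q qD [x [rho [aff _]]]] := cheap_affordable m0 s0A inv vD.
  exact: no_aff q x rho qD aff.
case: s0 st m0 s0A inv => Cp b st /= mCp CpA inv.
have Cp_bounded : Cp `<=` cint 0 c by move=> y /CpA /A_bounded.
have [m1 _] := mes_step_bounded st mCp Cp_bounded.
have s1A : s1.1 `<=` A by move=> y /(mes_reach_grow run) /s'A.
exact: IH fin s'A m1 s1A (budget_inv_step mCp CpA inv st).
Qed.

End BudgetInvariant.

Theorem mainTheorem8 (R : realType) (n : nat) (c alpha : R) (C : 'I_n -> set R)
  (A : set R) :
  (0 < n)%N -> 0 < c -> 0 < alpha -> alpha <= c ->
  (forall i, is_piece c (C i)) ->
  mes_outcome c alpha C A ->
  cake_EJR alpha C A.
Proof.
move=> n_gt0 c_gt0 alpha_gt0 _ C_piece [bf [run fin]] t t_gt0 Ns [cohesive common].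
have c_ge0 := ltW c_gt0.
have C_bounded i := piece_bounded (C_piece i).
have [mA A_bounded] := mes_reach_bounded run measurable0 (sub0set _).
have Ns_gt0 : (0 < #|Ns|)%N.
  by rewrite -(ltr0n R); apply: lt_le_trans cohesive; rewrite !mulr_gt0 ?invr_gt0 ?ltr0n.
have [//|no_sat] := pselect (exists2 j, j \in Ns & t <= len (C j `&` A)).
have unsat i : i \in Ns -> len (C i `&` A) < t.
  by move=> iN; rewrite ltNge; apply/negP => ?; apply: no_sat; exists i.
exfalso; apply: (budget_inv_reach_false c_ge0 C_bounded mA A_bounded Ns_gt0 common unsat
  run fin (@subset_refl _ A) measurable0 (sub0set _)).
exact: budget_inv_init.
Qed.
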